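(* Let $X$ and $Y$ be topological spaces that are $T_1$ and regular, let $X$ be submetrizable, and let $f\colon X \to Y$ be a continuous surjective map which is closed and sequence-covering. Then $f$ is 1-sequence-covering.
   Context: A topological space $\langle X,\tau_X\rangle$ is submetrizable if there is a metrizable topology $\sigma$ on $X$ with $\sigma\subseteq\tau_X$ (equivalently, $X$ admits a continuous one-to-one map onto a metrizable space). A map is closed if images of closed sets are closed. For a space $Z$ and $z\in Z$, let $\mathsf{ConvSeq}(Z,z)$ denote the set of non-trivial (i.e. not eventually constant) sequences in $Z$ converging to $z$, and $\mathsf{ConvSeq}(Z)=\bigcup_{z\in Z}\mathsf{ConvSeq}(Z,z)$. For sequences $q=\langle q(n)\rangle_{n\in\omega}$ in $X$ and $p=\langle p(n)\rangle_{n\in\omega}$ in $Y$, say $q$ covers $p$ if $f(q(n))=p(n)$ for all $n\in\omega$. The map $f$ is sequence-covering if for every $p\in\mathsf{ConvSeq}(Y)$ there is $q\in\mathsf{ConvSeq}(X)$ covering $p$. The map $f$ is 1-sequence-covering if for every $y\in Y$ there is $x\in f^{-1}(y)$ such that for every $p\in\mathsf{ConvSeq}(Y,y)$ there is $q\in\mathsf{ConvSeq}(X,x)$ covering $p$. *)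

From HB Require Import structures.
From mathcomp Require Import all_boot all_order.
From mathcomp Require Import all_classical topology.
From Stdlib Require Import Reals.
Set Implicit Arguments. Unset Strict Implicit. Unset Printing Implicit Defensive.
Local Open Scope classical_set_scope.

Definition is_metric (X : Type) (d : X -> X -> R) : Prop :=
  [/\ (forall x y, (0 <= d x y)%R),
      (forall x y, d x y = 0%R <-> x = y),
      (forall x y, d x y = d y x) &
      (forall x y z, (d x z <= d x y + d y z)%R)].

Definition metric_open (X : Type) (d : X -> X -> R) (A : set X) : Prop :=
  forall x, A x -> exists e : R, (0 < e)%R /\ (forall y, (d x y < e)%R -> A y).

Definition submetrizable (X : topologicalType) : Prop :=
  exists d : X -> X -> R, is_metric d /\
    (forall A : set X, metric_open d A -> open A).

Definition closed_map (X Y : topologicalType) (f : X -> Y) : Prop :=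
  forall A : set X, closed A -> closed (f @` A).

Definition ConvSeq (Z : topologicalType) (z : Z) (p : nat -> Z) : Prop :=
  p @ \oo --> z /\ ~ (exists (N : nat) (c : Z), forall n, (N <= n)%N -> p n = c).

Definition covers (X Y : Type) (f : X -> Y) (q : nat -> X) (p : nat -> Y) : Prop :=
  forall n, f (q n) = p n.

Definition sequence_covering (X Y : topologicalType) (f : X -> Y) : Prop :=
  forall (y : Y) (p : nat -> Y), ConvSeq y p ->
    exists (x : X) (q : nat -> X), ConvSeq x q /\ covers f q p.

Definition one_sequence_covering (X Y : topologicalType) (f : X -> Y) : Prop :=
  forall y : Y, exists x : X, f x = y /\
    forall p : nat -> Y, ConvSeq y p ->
      exists q : nat -> X, ConvSeq x q /\ covers f q p.

(* Fix [y] and a metric [d] whose topology is coarser than that of [X]. Call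
   [x] in the fibre over [y] a lift point of a sequence [p --> y] if the fibres
   over the [p n] come d-arbitrarily close to [x]. A sequence [q --> x]
   covering [p] makes [x] a lift point of [p]; conversely, since [f] is closed,
   preimages of the [p n] chosen as d-close to a lift point [x] as possible
   converge to [x] in [X]. So it suffices to find one [x] that is a lift point
   of every [p --> y].
   Otherwise every fibre point has a d-ball free of lift points of some [p].
   Repeatedly choose such a ball, of minimal radius index for the current
   sequence, and interleave the current sequence with the repelling one: the
   centres are d-separated, each later centre lifts every earlier stage, and
   closedness of [f] gives a fibre point [z] at which the centres d-cluster.
   Then [z] lifts every stage, so the ball repelling [z] bounds all the radii
   from below, contradicting the separation. *)

From mathcomp Require Import all_boot all_order all_classical topology.
From Stdlib Require Import Reals Lra.
From mathcomp Require Import zify.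
Set Implicit Arguments.
Unset Strict Implicit. Unset Printing Implicit Defensive.
Local Open Scope classical_set_scope.

Definition eps (k : nat) : R := (/ INR k.+1)%R.

Lemma eps_gt0 k : (0 < eps k)%R.
Proof. exact/Rinv_0_lt_compat/lt_0_INR/ltP. Qed.

Lemma leq_eps k K : (k <= K)%N -> (eps K <= eps k)%R.
Proof.
move=> kK; apply: Rinv_le_contravar; first exact/lt_0_INR/ltP.
exact/le_INR/leP.
Qed.

Lemma exists_eps_lt r : (0 < r)%R -> exists k, (eps k < r)%R.
Proof.
move=> /archimed_cor1 [k [kr /lt_0_INR k_gt0]]; exists k.
apply: Rle_lt_trans kr; apply: Rinv_le_contravar => //; exact/le_INR/leP.
Qed.

Lemma nonconst_frequently_ne (T : Type) (p : nat -> T) c :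
  ~ (exists N c', forall n, (N <= n)%N -> p n = c') ->
  forall N, exists2 n, (N <= n)%N & p n <> c.
Proof.
move=> p_nonconst N; apply: contrapT => noN; apply: p_nonconst; exists N, c.
by move=> n Nn; apply: contrapT => pnc; apply: noN; exists n.
Qed.

Definition interleave (T : Type) (p1 p2 : nat -> T) (n : nat) : T :=
  if odd n then p2 n./2 else p1 n./2.

Lemma interleave_double (T : Type) (p1 p2 : nat -> T) n :
  interleave p1 p2 n.*2 = p1 n.
Proof. by rewrite /interleave odd_double doubleK. Qed.

Lemma interleave_doubleS (T : Type) (p1 p2 : nat -> T) n :
  interleave p1 p2 n.*2.+1 = p2 n.
Proof. by rewrite /interleave /= odd_double /= uphalf_double. Qed.

Lemma ConvSeq_interleave (T : topologicalType) (z : T) p1 p2 :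
  ConvSeq z p1 -> p2 @ \oo --> z -> ConvSeq z (interleave p1 p2).
Proof.
move=> [p1z p1_nonconst] p2z; split.
  move=> U Uz; have [N1 _ p1U] := p1z U Uz; have [N2 _ p2U] := p2z U Uz.
  exists (N1 + N2).*2 => // n /= Nn; rewrite /interleave.
  by case: ifP => _; [apply: p2U | apply: p1U]; rewrite /=; lia.
move=> [N [c pc]]; apply: p1_nonconst; exists N, c => n Nn.
by rewrite -(interleave_double p1 p2); apply: pc; lia.
Qed.

Lemma accessible_regular_hausdorff (T : topologicalType) :
  accessible_space T -> regular_space T -> hausdorff_space T.
Proof.
move=> accT regT x x' clxx'; apply: contrapT => /eqP /accT [A [oA Ax Ax']].
have [C Cx clCA] := regT x A (open_nbhs_nbhs (conj oA (set_mem Ax))).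
by move: Ax'; rewrite in_setE; apply; apply: clCA => B /(clxx' C B Cx).
Qed.

Lemma accessible_open_avoid (T : topologicalType) (a : nat -> T) z N :
  accessible_space T -> (forall j, a j <> z) ->
  exists2 O : set T, open_nbhs z O & forall j, (j < N)%N -> ~ O (a j).
Proof.
move=> accT az; elim: N => [|N [O [oO Oz] OaN]].
  by exists setT => //; split; [exact: openT|].
have /accT [A [oA Az AaN]] : z != a N by apply/eqP => /esym /az.
exists (O `&` A); first by split; [exact: openI | split=> //; exact: set_mem].
move=> j; rewrite ltnS leq_eqVlt => /orP [/eqP -> | ltjN] [Oaj Aaj].
  by move: AaN; rewrite in_setE.
exact: OaN ltjN Oaj.
Qed.

Lemma closed_map_cluster (X Y : topologicalType) (f : X -> Y) (a : nat -> X)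
    (S : set nat) y :
  closed_map f -> (f \o a) @ \oo --> y ->
  (forall N, exists2 n, (N <= n)%N & S n) ->
  exists2 z, closure (a @` S) z & f z = y.
Proof.
move=> fcl fay Sinf.
have clfS : closed (f @` closure (a @` S)) by apply/fcl/closed_closure.
have : closure (f @` closure (a @` S)) y.
  move=> V /fay [N _ faV]; have [n Nn Sn] := Sinf N.
  exists (f (a n)); split; last exact: faV.
  by exists (a n) => //; apply: subset_closure; exists n.
by rewrite -(closure_id _).1 // => -[z]; exists z.
Qed.

Section CoarserMetric.
Variables (X : topologicalType) (d : X -> X -> R).
Hypotheses (d_metric : is_metric d)
  (d_coarser : forall A : set X, metric_open d A -> open A).

Lemma nbhs_dball x e : (0 < e)%R -> nbhs x [set w | (d x w < e)%R].
Proof.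
case: d_metric => _ d_eq0 _ d_triangle e_gt0; apply: open_nbhs_nbhs; split.
  apply: d_coarser => w /= xw; exists (e - d x w)%R; split; first lra.
  by move=> v wv /=; have := d_triangle x w v; lra.
by rewrite /= (proj2 (d_eq0 x x) erefl).
Qed.

Lemma closure_image_dball (a : nat -> X) (S : set nat) z :
  accessible_space X -> closure (a @` S) z -> (forall j, a j <> z) ->
  forall e, (0 < e)%R ->
  forall N, exists j, [/\ (N <= j)%N, S j & (d (a j) z < e)%R].
Proof.
move=> accX clz az e e_gt0 N; apply: contrapT => noj.
have [O [oO Oz] OaN] := accessible_open_avoid N accX az.
have nzO : nbhs z O by apply: open_nbhs_nbhs.
have [_ [[j Sj <-] [Oaj zaj]]] := clz _ (filterI nzO (nbhs_dball z e_gt0)).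
have [ltjN | leNj] := ltnP j N; first exact: OaN ltjN Oaj.
by apply: noj; exists j; split => //; case: d_metric => _ _ ->.
Qed.

(* Otherwise infinitely many [q n] avoid a neighbourhood of [x]; by closedness
   of [f] they accumulate at a second point [z] of the fibre, which the
   coarser metric separates from [x]. *)
Lemma closed_map_dcvg_cvg (Y : topologicalType) (f : X -> Y) (q : nat -> X) x :
  accessible_space X -> closed_map f ->
  (f \o q) @ \oo --> f x -> (forall n, f (q n) = f x -> q n = x) ->
  (forall e, (0 < e)%R -> \forall n \near \oo, (d (q n) x < e)%R) ->
  q @ \oo --> x.
Proof.
move=> accX fcl fqx qx dqx U Ux; apply: contrapT => qU.
have Sinf N : exists2 n, (N <= n)%N & ~ U (q n).
  apply: contrapT => noN; apply: qU; exists N => // n Nn.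
  by apply: contrapT => Uqn; apply: noN; exists n.
have [z clz fz] := closed_map_cluster fcl fqx Sinf.
have zx : z <> x.
  by move=> zx; rewrite zx in clz; have [_ [[j qjU <-] ?]] := clz U Ux.
have qz j : q j <> z by move=> qjz; apply: zx; rewrite -qjz qx // qjz fz.
case: d_metric => d_ge0 d_eq0 d_sym d_triangle.
have dzx_gt0 : (0 < d z x)%R.
  have : d z x <> 0%R by move/d_eq0.
  by have := d_ge0 z x; lra.
have e_gt0 : (0 < d z x / 2)%R by lra.
have [N _ dqN] := dqx _ e_gt0.
have [j [Nj _ dqjz]] := closure_image_dball accX clz qz e_gt0 N.
have := dqN j Nj; have := d_triangle z (q j) x; rewrite d_sym in dqjz; lra.
Qed.

End CoarserMetric.

Section LiftPoints.
Variables (X Y : topologicalType) (f : X -> Y) (d : X -> X -> R) (y : Y).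
Hypotheses (d_metric : is_metric d)
  (d_coarser : forall A : set X, metric_open d A -> open A)
  (accX : accessible_space X) (f_closed : closed_map f)
  (f_surj : forall y' : Y, exists x : X, f x = y').

Definition lift_point (p : nat -> Y) (x : X) : Prop :=
  f x = y /\ forall e, (0 < e)%R ->
    \forall n \near \oo, exists w, f w = p n /\ (d w x < e)%R.

Definition repels (p : nat -> Y) (x : X) (k : nat) : Prop :=
  ConvSeq y p /\ forall z, (d z x < eps k)%R -> ~ lift_point p z.

Lemma cover_lift_point p q x :
  q @ \oo --> x -> covers f q p -> f x = y -> lift_point p x.
Proof.
move=> qx fqp fx; split => // e e_gt0.
have [N _ qN] := qx _ (nbhs_dball d_metric d_coarser x e_gt0).
exists N => // n /qN xqn; exists (q n).
by split => //; case: d_metric => _ _ ->.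
Qed.

Lemma lift_point_dclosed p z : f z = y ->
  (forall e, (0 < e)%R -> exists2 x, lift_point p x & (d x z < e)%R) ->
  lift_point p z.
Proof.
case: d_metric => _ _ _ d_triangle fz zcl; split => // e e_gt0.
have e2_gt0 : (0 < e / 2)%R by lra.
have [x [_ /(_ _ e2_gt0) [N _ pN]] xz] := zcl _ e2_gt0.
exists N => // n /pN [w [fw wx]]; exists w; split => //.
by have := d_triangle w x z; lra.
Qed.

Lemma lift_point_interleave p1 p2 x :
  lift_point (interleave p1 p2) x -> lift_point p1 x /\ lift_point p2 x.
Proof.
move=> [fx xp]; split; split => // e /xp [N _ pN]; exists N => // n /= Nn.
  by rewrite -(interleave_double p1 p2); apply: pN => /=; lia.
by rewrite -(interleave_doubleS p1 p2); apply: pN => /=; lia.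
Qed.

Lemma repels_of_not_lift_point x : f x = y ->
  ~ (forall p, ConvSeq y p -> lift_point p x) -> exists p k, repels p x k.
Proof.
case: d_metric => _ _ _ d_triangle fx.
move=> /existsNP [p /not_implyP [py /not_andP [//| /existsNP [e]]]].
move=> /not_implyP [e_gt0 far].
have e2_gt0 : (0 < e / 2)%R by lra.
have [k ke] := exists_eps_lt e2_gt0.
exists p, k; split => // z zx [_ /(_ _ e2_gt0) [N _ zN]].
apply: far; exists N => // n /zN [w [fw wz]]; exists w; split => //.
by have := d_triangle w z x; lra.
Qed.

Lemma best_preimage x y' n : exists w, [/\ f w = y', f x = y' -> w = x &
  forall k, (k < n)%N -> (exists w', f w' = y' /\ (d w' x < eps k)%R) ->
    (d w x < eps k)%R].
Proof.
case: d_metric => _ d_eq0 _ _.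
have [fx | fx] := pselect (f x = y').
  exists x; split => // k _ _.
  by rewrite (proj2 (d_eq0 x x) erefl); exact: eps_gt0.
suff [w [fw wx]] : exists w, f w = y' /\ forall k, (k < n)%N ->
    (exists w', f w' = y' /\ (d w' x < eps k)%R) -> (d w x < eps k)%R.
  by exists w; split.
elim: n => [|n [w [fw wx]]]; first by have [w fw] := f_surj y'; exists w.
have [[w' [fw' w'x]] | far] :=
  pselect (exists w', f w' = y' /\ (d w' x < eps n)%R).
  exists w'; split => // k; rewrite ltnS => kn _.
  exact: Rlt_le_trans w'x (leq_eps kn).
exists w; split => // k; rewrite ltnS leq_eqVlt => /orP [/eqP -> // | kn].
exact: wx.
Qed.

Lemma lift_point_cover p x : ConvSeq y p -> lift_point p x ->
  exists q, ConvSeq x q /\ covers f q p.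
Proof.
move=> [py p_nonconst] [fx xp].
have [q qP] := choice (fun n => best_preimage x (p n) n).
have fqp : covers f q p by move=> n; case: (qP n).
exists q; split => //; split; last first.
  by move=> [N [c qc]]; apply: p_nonconst; exists N, (f c) => n /qc <-.
apply: (closed_map_dcvg_cvg d_metric d_coarser accX f_closed).
- by rewrite fx (_ : f \o q = p) //; apply/funext.
- by move=> n; rewrite fqp => /esym; case: (qP n).
move=> e e_gt0; have [k ke] := exists_eps_lt e_gt0.
have [N _ pN] := xp _ (eps_gt0 k).
exists (maxn N k.+1) => // n /=; rewrite geq_max => /andP [Nn kn].
by case: (qP n) => _ _ /(_ k kn (pN n Nn)); lra.
Qed.

(* Pick, near each [xs j], a point [w j] over some [p n <> y]; closedness of
   [f] puts a point [z] of the fibre in the closure of the [w j]. *)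
Lemma lift_points_cluster p (xs : nat -> X) :
  ConvSeq y p -> (forall j, lift_point p (xs j)) ->
  exists2 z, f z = y & forall e, (0 < e)%R ->
    forall N, exists2 j, (N <= j)%N & (d (xs j) z < e)%R.
Proof.
case: d_metric => _ _ d_sym d_triangle [py p_nonconst] xsp.
have nwP j : exists nw : nat * X, [/\ (j <= nw.1)%N, p nw.1 <> y,
    f nw.2 = p nw.1 & (d nw.2 (xs j) < eps j)%R].
  have [_ /(_ _ (eps_gt0 j)) [N _ pN]] := xsp j.
  have [n] := nonconst_frequently_ne y p_nonconst (maxn N j).
  rewrite geq_max => /andP [Nn jn] pny.
  by have [w [fw wx]] := pN n Nn; exists (n, w).
have [nw {}nwP] := choice nwP; pose w j := (nw j).2.
have fwy : (f \o w) @ \oo --> y.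
  move=> V /py [N _ pV]; exists N => // j /= Nj.
  by case: (nwP j) => jn _ -> _; apply: pV; exact: leq_trans jn.
have [z clz fz] := closed_map_cluster (S := setT) f_closed fwy
  (fun N => ex_intro2 _ _ N (leqnn N) I).
exists z => // e e_gt0 N.
have wz j : w j <> z.
  by case: (nwP j) => _ pny fwj _ wjz; apply: pny; rewrite -fwj -/(w j) wjz.
have e2_gt0 : (0 < e / 2)%R by lra.
have [K Ke] := exists_eps_lt e2_gt0.
have [j [+ _ wjz]] :=
  closure_image_dball d_metric d_coarser accX clz wz e2_gt0 (maxn N K).
rewrite geq_max => /andP [Nj Kj]; exists j => //.
case: (nwP j) => _ _ _; rewrite -/(w j) d_sym => xwj.
by have := leq_eps Kj; have := d_triangle (xs j) (w j) z; lra.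
Qed.

Definition minimal_repeller (P : nat -> Y) (x : X) (k : nat) (p : nat -> Y) :=
  [/\ lift_point P x, repels p x k &
    forall x' k' p', lift_point P x' -> repels p' x' k' -> (k <= k')%N].

Lemma exists_minimal_repeller P :
  (forall x, f x = y -> exists p k, repels p x k) ->
  (exists x, lift_point P x) -> exists x k p, minimal_repeller P x k p.
Proof.
move=> rep [x Px]; have [p [k xk]] := rep x Px.1.
have ex : exists k, `[< exists x p, lift_point P x /\ repels p x k >].
  by exists k; apply/asboolP; exists x, p.
case: (ex_minnP ex) => k0 /asboolP [x0 [p0 [Px0 x0k0]]] k0_min.
exists x0, k0, p0; split => // x' k' p' Px' x'k'.
by apply: k0_min; apply/asboolP; exists x', p'.
Qed.

Section Refinement.
Variables (x_of : (nat -> Y) -> X) (k_of : (nat -> Y) -> nat)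
  (p_of : (nat -> Y) -> nat -> Y).
Hypothesis step : forall P, ConvSeq y P ->
  minimal_repeller P (x_of P) (k_of P) (p_of P).
Variable p0 : nat -> Y.
Hypothesis p0_cvg : ConvSeq y p0.

Definition refinement (m : nat) : nat -> Y :=
  iter m (fun P => interleave P (p_of P)) p0.

Let xs m := x_of (refinement m).
Let ks m := k_of (refinement m).

Lemma refinement_cvg m : ConvSeq y (refinement m).
Proof.
elim: m => // m IHm; have [_ [p_cvg _] _] := step IHm.
exact: ConvSeq_interleave IHm p_cvg.1.
Qed.

Lemma lift_point_refinement m j x : (m <= j)%N ->
  lift_point (refinement j) x -> lift_point (refinement m) x.
Proof.
elim: j => [|j IHj]; first by rewrite leqn0 => /eqP ->.
rewrite leq_eqVlt => /orP [/eqP -> // | /IHj liftj /lift_point_interleave].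
by case=> /liftj.
Qed.

Lemma lift_point_xs m : lift_point (refinement m) (xs m).
Proof. by case: (step (refinement_cvg m)). Qed.

Lemma xs_separated m j : (m < j)%N -> (eps (ks m) <= d (xs j) (xs m))%R.
Proof.
move=> mj; apply: Rnot_lt_le => xsjm.
have [_ [_ repm] _] := step (refinement_cvg m); apply: (repm _ xsjm).
exact: (lift_point_interleave (lift_point_refinement mj (lift_point_xs j))).2.
Qed.

Lemma refinement_absurd : ~ (forall x, f x = y -> exists p k, repels p x k).
Proof.
case: d_metric => _ _ d_sym d_triangle rep.
have [z fz zcl] := lift_points_cluster (refinement_cvg 0)
  (fun j => lift_point_refinement (leq0n j) (lift_point_xs j)).
have zP m : lift_point (refinement m) z.
  apply: lift_point_dclosed fz _ => e /zcl /(_ m) [j mj xsjz].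
  by exists (xs j) => //; exact: lift_point_refinement mj (lift_point_xs j).
have [p [K zK]] := rep z fz.
have ksK m : (ks m <= K)%N.
  by have [_ _] := step (refinement_cvg m); apply; [exact: zP | exact: zK].
have eK_gt0 : (0 < eps K / 2)%R by have := eps_gt0 K; lra.
have [j1 _ xsj1z] := zcl _ eK_gt0 0.
have [j2 j12 xsj2z] := zcl _ eK_gt0 j1.+1.
have := xs_separated j12; have := leq_eps (ksK j1).
by have := d_triangle (xs j2) z (xs j1); rewrite (d_sym z); lra.
Qed.

End Refinement.

Lemma universal_lift_point :
  (forall p, ConvSeq y p -> exists x, lift_point p x) ->
  exists2 x, f x = y & forall p, ConvSeq y p -> lift_point p x.
Proof.
move=> lift_ex; apply: contrapT => no_univ.
have rep x : f x = y -> exists p k, repels p x k.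
  move=> fx; apply: (repels_of_not_lift_point fx) => xP.
  by apply: no_univ; exists x.
have [x0 fx0] := f_surj y.
have [[p0 p0_cvg] | no_seq] := pselect (exists p0, ConvSeq y p0); last first.
  by apply: no_univ; exists x0 => // p py; case: no_seq; exists p.
have step P : exists t : X * nat * (nat -> Y), ConvSeq y P ->
    minimal_repeller P t.1.1 t.1.2 t.2.
  have [/lift_ex Px | nP] := pselect (ConvSeq y P).
    by have [x [k [p xkp]]] := exists_minimal_repeller rep Px; exists (x, k, p).
  by exists (x0, 0, p0) => /nP.
have [g gP] := choice step.
exact: (refinement_absurd (x_of := fun P => (g P).1.1)
  (k_of := fun P => (g P).1.2) (p_of := fun P => (g P).2) gP p0_cvg rep).
Qed.

End LiftPoints.

Lemma sequence_covering_lift_point (X Y : topologicalType) (f : X -> Y) d y p :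
  is_metric d -> (forall A : set X, metric_open d A -> open A) ->
  continuous f -> hausdorff_space Y -> sequence_covering f ->
  ConvSeq y p -> exists x, lift_point f d y p x.
Proof.
move=> d_metric d_coarser f_cont hY f_sc py.
have [x [q [[qx _] fqp]]] := f_sc y p py.
have fx : f x = y.
  apply: (cvg_unique hY (F := p @ \oo)); last exact: py.1.
  have -> : p = f \o q by apply/funext => n; rewrite /= fqp.
  exact: continuous_cvg (f_cont x) qx.
by exists x; exact: cover_lift_point qx fqp fx.
Qed.

Theorem mainTheorem1 (X Y : topologicalType) (f : X -> Y) :
  accessible_space X -> regular_space X ->
  accessible_space Y -> regular_space Y ->
  submetrizable X ->
  continuous f -> (forall y : Y, exists x : X, f x = y) ->
  closed_map f -> sequence_covering f ->
  one_sequence_covering f.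
Proof.
move=> accX _ accY regY [d [d_metric d_coarser]] f_cont f_surj f_closed f_sc y.
have hY := accessible_regular_hausdorff accY regY.
have lift_ex p : ConvSeq y p -> exists x, lift_point f d y p x :=
  sequence_covering_lift_point d_metric d_coarser f_cont hY f_sc.
have [x fx xP] :=
  universal_lift_point d_metric d_coarser accX f_closed f_surj lift_ex.
exists x; split => // p py.
exact: (lift_point_cover d_metric d_coarser accX f_closed f_surj py (xP p py)).
Qed.
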